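(* In the 2-sided error regime, there exists an algorithm that finds a realized spanning tree with high probability, using $O(m\log m)$ queries in a moldgraph of $m$ edges.
   Context: Problem (graph connectivity with noisy queries): a graph $G=(V,E)$, the moldgraph, with $m$ edges is given. An adversary selects an arbitrary connected spanning subgraph of $G$ to be realized. The algorithm may query an oracle on any edge $e$ (``Is $e$ realized?'') and receives ``Yes''/``No''; each query costs $1$, and answers to distinct queries (including repeated queries of the same edge) are independent. Goal: output a spanning tree of $G$ all of whose edges are realized. In the 2-sided error regime, each answer is wrong with a constant probability $p<1/2$. ``With high probability'' means with probability tending to $1$ as $m\to\infty$. *)

From HB Require Import structures.
From mathcomp Require Import all_boot all_order all_algebra.
From mathcomp Require Import boolp reals exp.
Set Implicit Arguments. Unset Strict Implicit. Unset Printing Implicit Defensive.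
Import Order.TTheory GRing.Theory Num.Theory.

(* A graph on vertex set 'I_n is given by its edge set: a set of 2-subsets. *)
Definition simple_graph n (E : {set {set 'I_n}}) : Prop :=
  forall e, e \in E -> #|e| = 2%N.

Definition adjS n (S : {set {set 'I_n}}) : rel 'I_n :=
  fun x y => [set x; y] \in S.

Definition connected_sp n (S : {set {set 'I_n}}) : Prop :=
  forall u v : 'I_n, connect (adjS S) u v.

Definition has_cycle n (S : {set {set 'I_n}}) : Prop :=
  exists s : seq 'I_n, [/\ (3 <= size s)%N, uniq s & cycle (adjS S) s].

Definition spanning_tree n (E T : {set {set 'I_n}}) : Prop :=
  [/\ T \subset E, connected_sp T & ~ has_cycle T].

(* Adaptive query algorithms: given the history of answers received so far,
   either query an edge or output an edge set. *)
Inductive action n := Query of {set 'I_n} | Output of {set {set 'I_n}}.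

(* An algorithm knows the moldgraph (n, E) and adapts to answers. *)
Definition algorithm := forall n : nat, {set {set 'I_n}} -> seq bool -> action n.

(* Execution with realized edge set Rz and error pattern flips:
   the k-th query (0-based) is answered wrongly iff flips k.
   fuel bounds the number of queries; returns the output and the
   number of queries used, or None if fuel was exhausted. *)
Fixpoint exec n (alg : seq bool -> action n) (Rz : {set {set 'I_n}})
    (flips : nat -> bool) (fuel : nat) (h : seq bool)
    : option ({set {set 'I_n}} * nat) :=
  match alg h with
  | Output T => Some (T, size h)
  | Query e =>
      match fuel with
      | 0 => None
      | S f => exec alg Rz flips f (rcons h ((e \in Rz) (+) flips (size h)))
      end
  end.

Definition ext_flips K (f : {ffun 'I_K -> bool}) : nat -> bool :=
  fun k => match @insub nat (fun k => k < K)%N 'I_K k with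
           | Some i => f i | None => false end.

Local Open Scope ring_scope.

Definition weight (R : realType) (p : R) K (f : {ffun 'I_K -> bool}) : R :=
  \prod_(i : 'I_K) (if f i then p else 1 - p).

Definition success n (E Rz : {set {set 'I_n}})
    (o : option ({set {set 'I_n}} * nat)) : Prop :=
  match o with
  | Some (T, _) => spanning_tree E T /\ T \subset Rz
  | None => False
  end.

Definition successb n (E Rz : {set {set 'I_n}})
    (o : option ({set {set 'I_n}} * nat)) : bool :=
  `[< success E Rz o >].

From HB Require Import structures.
From mathcomp Require Import all_boot all_order all_algebra.
From mathcomp Require Import boolp reals exp.
From mathcomp Require Import zify.
From mathcomp.algebra_tactics Require Import ring lra.
Import Order.TTheory GRing.Theory Num.Theory.
Set Implicit Arguments. Unset Strict Implicit. Unset Printing Implicit Defensive.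

(* Ask about every edge [2r] times and keep it iff more than [r] answers are "yes". Unless
   some edge receives at least [r] wrong answers, the kept edges are exactly the realized
   ones, so any spanning tree of them is realized. By the exponential-moment (Chernoff)
   bound, [2r] independent answers with error probability [p < 1/2] contain at least [r]
   errors with probability at most [g ^ r] for a constant [g < 1]; taking [r] of order
   [ln m] makes this at most [1 / m^2], and a union bound over the [m] edges bounds the
   failure probability by [1 / m], with [2 r m = O(m log m)] queries. *)

Section SpanningTree.
Variable n : nat.
Implicit Types (S T : {set {set 'I_n}}) (u v x y : 'I_n).

Lemma adjS_sym T : symmetric (adjS T).
Proof. by move=> x y; rewrite /adjS setUC. Qed.

Lemma set2_eq_mem u v x y : [set u; v] = [set x; y] -> (u == x) || (u == y).
Proof. by move=> e; have := set21 u v; rewrite e !inE. Qed.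

Lemma connect_setD1_edge T x y :
  connect (adjS (T :\ [set x; y])) x y ->
  subrel (adjS T) (connect (adjS (T :\ [set x; y]))).
Proof.
move=> cxy u v Tuv.
have [/eqP uv_xy | uv_ne] := boolP ([set u; v] == [set x; y]); last first.
  by apply: connect1; rewrite /adjS !inE uv_ne.
have cyx : connect (adjS (T :\ [set x; y])) y x.
  by rewrite (sym_connect_sym (@adjS_sym _)).
have := set2_eq_mem uv_xy; have := set2_eq_mem (etrans (setUC _ _) uv_xy).
by case/orP=> /eqP-> /orP[]/eqP->.
Qed.

Lemma cycle_path_avoids_edge T x y t :
  uniq [:: x, y & t] -> t != [::] -> path (adjS T) y (rcons t x) ->
  path (adjS (T :\ [set x; y])) y (rcons t x).
Proof.
rewrite /= !inE negb_or => /and3P[/andP[xy xt] yt _] t_nil.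
rewrite !rcons_path => /andP[path_t Tlast]; apply/andP; split.
  apply: (sub_in_path (P := predC1 x)) path_t; last first.
    apply/allP=> w; rewrite !inE => /orP[/eqP-> | wt]; first by rewrite eq_sym.
    by apply: contraNneq xt => <-.
  move=> u v /[!inE] ux vx; rewrite /adjS !inE => ->; rewrite andbT.
  by apply: contraTneq isT => /esym/set2_eq_mem; rewrite !(eq_sym x) (negbTE ux) (negbTE vx).
have last_t : last y t \in t by move: t_nil; case: (t) => // w t' _ /=; apply: mem_last.
move: Tlast; rewrite /adjS !inE => ->; rewrite andbT; apply/eqP => /set2_eq_mem.
by case/orP=> /eqP last_eq; [move: xt | move: yt]; rewrite -last_eq last_t.
Qed.

Lemma has_cycle_redundant_edge T : has_cycle T ->
  exists2 e, e \in T & subrel (adjS T) (connect (adjS (T :\ e))).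
Proof.
case=> s [size_s uniq_s]; case: s size_s uniq_s => [|x [|y t]] //= size_s uniq_s.
move=> /andP[Txy path_t].
exists [set x; y] => //; apply: connect_setD1_edge.
rewrite (sym_connect_sym (@adjS_sym _)).
have t_nil : t != [::] by case: t size_s {uniq_s path_t}.
apply: (path_connect (cycle_path_avoids_edge uniq_s t_nil path_t)).
by rewrite inE mem_rcons inE eqxx orbT.
Qed.

Lemma spanning_tree_exists S : connected_sp S -> exists T, spanning_tree S T.
Proof.
suff tree_below k T : (#|T| <= k)%N -> T \subset S -> connected_sp T ->
  exists T', spanning_tree S T' by exact: tree_below.
elim: k T => [|k IHk] T card_T sub_TS conn_T.
  exists T; split=> // -[s [size_s _]].
  case: s size_s => [|x [|y t]] //= _ /andP[Txy _].
  have T0 : T = set0 by apply: cards0_eq; apply/eqP; rewrite -leqn0.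
  by rewrite /adjS T0 inE in Txy.
have [cyc_T | acyc_T] := pselect (has_cycle T); last by exists T.
have [e Te e_redundant] := has_cycle_redundant_edge cyc_T.
apply: (IHk (T :\ e)).
- by move: card_T; rewrite (cardsD1 e T) Te.
- exact: subset_trans (subsetDl _ _) sub_TS.
- by move=> u v; apply: connect_sub e_redundant _ _ (conn_T u v).
Qed.

Definition pick_tree S : {set {set 'I_n}} :=
  odflt set0 [pick T | `[< spanning_tree S T >] ].

Lemma pick_treeP S : connected_sp S -> spanning_tree S (pick_tree S).
Proof.
move=> /spanning_tree_exists[T0 tree_T0]; rewrite /pick_tree.
case: pickP => [T /asboolP // | /(_ T0)].
by move/asboolP: tree_T0 => ->.
Qed.

End SpanningTree.

Definition block_count (B : nat) (g : nat -> bool) (a : nat) : nat :=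
  \sum_(i < B) (g (a * B + i) : nat).

Lemma block_count_negb B g a :
  block_count B (fun j => ~~ g j) a = B - block_count B g a.
Proof.
have count_sum : block_count B (fun j => ~~ g j) a + block_count B g a = B.
  rewrite -big_split (eq_bigr (fun=> 1)) => [|i _]; last exact: addn_negb.
  by rewrite sum1_card card_ord.
by move: count_sum; lia.
Qed.

Lemma big_nat_block (T : Type) (idx : T) (op : Monoid.law idx) m B a (F : nat -> T) :
  0 < B -> a < m ->
  \big[op/idx]_(0 <= j < m * B | j %/ B == a) F j = \big[op/idx]_(i < B) F (a * B + i).
Proof.
move=> B_gt0 a_lt_m.
have aB_le : a * B + B <= m * B by rewrite -mulSnr leq_mul2r a_lt_m orbT.
rewrite (@big_cat_nat _ _ _ (a * B)) ?(leq_trans (leq_addr B _) aB_le) //=.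
rewrite (@big_cat_nat _ _ _ (a * B + B) (a * B)) ?leq_addr //=.
rewrite big_nat_cond big_pred0 => [|j]; last first.
  apply/negbTE/negP => /andP[/andP[_ j_lt] /eqP j_div].
  by move: j_lt; rewrite -ltn_divLR // j_div ltnn.
rewrite Monoid.mul1m.
rewrite [X in op _ X]big_nat_cond [X in op _ X]big_pred0 => [|j]; last first.
  apply/negbTE/negP => /andP[/andP[j_ge _] /eqP j_div].
  by move: j_ge; rewrite -mulSnr -leq_divRL // j_div ltnn.
rewrite Monoid.mulm1 -{1}(add0n (a * B)) big_addn addKn big_mkord.
by apply: eq_big => [i | i _]; rewrite addnC // divnMDl // divn_small // addn0 eqxx.
Qed.

Lemma ext_flipsE K (f : {ffun 'I_K -> bool}) (j : 'I_K) : ext_flips f j = f j.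
Proof. by rewrite /ext_flips; case: insubP => [i _ /val_inj-> | ]; rewrite ?ltn_ord. Qed.

Definition block K B a : {pred 'I_K} := [pred j : 'I_K | j %/ B == a].
Arguments block : clear implicits.

Section Blocks.
Variables (m B a : nat).
Hypotheses (B_gt0 : 0 < B) (a_lt_m : a < m).

Lemma block_count_ext_flips (f : {ffun 'I_(m * B) -> bool}) :
  block_count B (ext_flips f) a = \sum_(j in block (m * B) B a) (f j : nat).
Proof.
rewrite /block_count -(big_nat_block _ (fun j => (ext_flips f j : nat)) B_gt0 a_lt_m).
by rewrite big_mkord; apply: eq_bigr => j _; rewrite ext_flipsE.
Qed.

Lemma card_block : #|block (m * B) B a| = B.
Proof.
rewrite -sum1_card -[RHS]card_ord -sum1_card -(big_nat_block _ (fun=> 1) B_gt0 a_lt_m).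
by rewrite big_mkord.
Qed.

End Blocks.

Section Weights.
Variables (R : realType) (p : R).
Local Open Scope ring_scope.

Lemma weight_ge0 K (f : {ffun 'I_K -> bool}) : 0 <= p <= 1 -> 0 <= weight p f.
Proof. by case/andP=> p0 p1; apply: prodr_ge0 => i _; case: (f i); rewrite ?subr_ge0. Qed.

Lemma sum_weight_expr K (P : {pred 'I_K}) (lam : R) :
  \sum_(f : {ffun 'I_K -> bool}) weight p f * lam ^+ (\sum_(j in P) (f j : nat))
  = (p * lam + (1 - p)) ^+ #|P|.
Proof.
pose F (j : 'I_K) (b : bool) := (if b then p else 1 - p) * (if j \in P then lam ^+ b else 1).
transitivity (\prod_(j : 'I_K) \sum_(b : bool) F j b).
  rewrite bigA_distr_bigA; apply: eq_bigr => f _.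
  by rewrite expr_sum big_mkcond -big_split.
rewrite -prodr_const [RHS]big_mkcond; apply: eq_bigr => j _.
by rewrite big_bool /F; case: (j \in P); rewrite /= ?mulr1 ?expr1 // addrC subrK.
Qed.

Lemma sum_weight K : \sum_(f : {ffun 'I_K -> bool}) weight p f = 1.
Proof.
have := sum_weight_expr (pred0 : {pred 'I_K}) 1; rewrite card0 expr0 => <-.
by apply: eq_bigr => f _; rewrite expr1n mulr1.
Qed.

Lemma sum_weight_complement K (g : {ffun 'I_K -> bool} -> R) :
  \sum_(f : {ffun 'I_K -> bool}) weight p f * g f
  = 1 - \sum_(f : {ffun 'I_K -> bool}) weight p f * (1 - g f).
Proof. by rewrite -[X in X - _](sum_weight K) -sumrB; apply: eq_bigr => f _; ring. Qed.

Lemma indicator_le_expr_div (lam : R) (r X : nat) :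
  1 <= lam -> ((r <= X)%N)%:R <= lam ^+ X / lam ^+ r.
Proof.
move=> lam_ge1; have lam_gt0 : 0 < lam by apply: lt_le_trans lam_ge1.
case: (leqP r X) => [rX | _]; last by rewrite divr_ge0 // exprn_ge0 // ltW.
by rewrite ler_pdivlMr ?exprn_gt0 // mul1r ler_weXn2l.
Qed.

(* Chernoff's bound: Markov's inequality applied to [lam ^+ X]. *)
Lemma chernoff_tail K (P : {pred 'I_K}) (lam : R) (r : nat) : 0 <= p <= 1 -> 1 <= lam ->
  \sum_(f : {ffun 'I_K -> bool}) weight p f * ((r <= \sum_(j in P) (f j : nat))%N)%:R
  <= (p * lam + (1 - p)) ^+ #|P| / lam ^+ r.
Proof.
move=> p01 lam_ge1; rewrite -sum_weight_expr mulr_suml; apply: ler_sum => f _.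
by rewrite -mulrA ler_wpM2l ?weight_ge0 ?indicator_le_expr_div.
Qed.

End Weights.

Section Constants.
Variables (R : realType) (p : R).
Local Open Scope ring_scope.

(* [tilt] is the optimal Chernoff parameter [(1 - p) / p] for the threshold [1/2], with
   [p] replaced by the midpoint [mid] of [p] and [1/2] so that it stays finite at [p = 0]. *)
Definition mid : R := (p + 1 / 2) / 2.
Definition tilt : R := (1 - p) / mid.
Definition rate : R := (p * tilt + (1 - p)) ^+ 2 / tilt.
Definition threshold_coef : R := 2 / - ln rate.
Definition threshold (m : nat) : nat := (Num.truncn (threshold_coef * ln m%:R)).+1.

Hypotheses (p_ge0 : 0 <= p) (p_lt_half : p < 1 / 2).

Lemma mid_gt0 : 0 < mid. Proof. by move: p_ge0; rewrite /mid; lra. Qed.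

Lemma tilt_ge1 : 1 <= tilt.
Proof. by rewrite /tilt ler_pdivlMr ?mid_gt0 // /mid; move: p_lt_half; lra. Qed.

Lemma rateE : rate = (1 - p) * (p + mid) ^+ 2 / mid.
Proof.
have one_sub_p_neq0 : 1 - p != 0 by apply/eqP; move: p_lt_half; lra.
by rewrite /rate /tilt; field; rewrite one_sub_p_neq0 lt0r_neq0 ?mid_gt0.
Qed.

Lemma rate_gt0 : 0 < rate.
Proof.
rewrite rateE divr_gt0 ?mid_gt0 // mulr_gt0 ?exprn_gt0 // /mid.
  by move: p_lt_half; lra.
by move: p_ge0; lra.
Qed.

Lemma rate_lt1 : rate < 1.
Proof.
rewrite rateE ltr_pdivrMr ?mid_gt0 // mul1r /mid.
have gap_sq : 0 < (1 / 2 - p) ^+ 2 by rewrite exprn_gt0 //; move: p_lt_half; lra.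
have : 0 < (1 / 2 - p) ^+ 2 * (15 / 8 - 9 / 4 * (1 / 2 - p)).
  by rewrite mulr_gt0 //; move: p_ge0; lra.
have -> : (1 / 2 - p) ^+ 2 * (15 / 8 - 9 / 4 * (1 / 2 - p))
  = (p + 1 / 2) / 2 - (1 - p) * (p + (p + 1 / 2) / 2) ^+ 2 by field.
lra.
Qed.

Lemma ln_rate_lt0 : ln rate < 0.
Proof. by rewrite ln_lt0 // rate_gt0 rate_lt1. Qed.

Lemma rate_expr_threshold (m : nat) : (2 <= m)%N -> rate ^+ threshold m <= (m%:R ^+ 2)^-1.
Proof.
move=> m_ge2; have m_gt0 : 0 < m%:R :> R by rewrite ltr0n (leq_trans _ m_ge2).
rewrite -ler_ln ?posrE ?invr_gt0 ?exprn_gt0 ?rate_gt0 //.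
rewrite lnV ?posrE ?exprn_gt0 // !lnXn ?rate_gt0 //.
rewrite -[ln rate *+ _]mulr_natr -[ln m%:R *+ 2]mulr_natr.
have r_ge : threshold_coef * ln m%:R <= (threshold m)%:R by apply/ltW/truncnS_gt.
have ln_rate_coef : ln rate * threshold_coef = - 2.
  by rewrite /threshold_coef; field; apply: ltr0_neq0 ln_rate_lt0.
apply: le_trans (ler_wnM2l (ltW ln_rate_lt0) r_ge) _.
by rewrite mulrA ln_rate_coef; lra.
Qed.

Lemma threshold_le (m : nat) : (2 <= m)%N ->
  (threshold m)%:R <= (threshold_coef + 1 / ln 2) * ln m%:R.
Proof.
move=> m_ge2; have ln2_gt0 : 0 < ln 2 :> R by apply: ln_gt0; lra.
have ln2_le : ln 2 <= ln m%:R :> R.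
  by rewrite ler_ln ?posrE ?ler_nat ?ltr0n ?(leq_trans _ m_ge2).
have coef_ge0 : 0 <= threshold_coef by rewrite divr_ge0 // oppr_ge0 ltW ?ln_rate_lt0.
have trunc_le : (Num.truncn (threshold_coef * ln m%:R))%:R <= threshold_coef * ln m%:R.
  by rewrite truncn_le mulr_ge0 // (le_trans (ltW ln2_gt0)).
have one_le : 1 <= ln m%:R / ln 2 :> R by rewrite ler_pdivlMr // mul1r.
rewrite /threshold -addn1 natrD mulrDl; apply: lerD trunc_le _.
by rewrite mulrC mul1r.
Qed.

End Constants.

Section MajorityVote.
Variables (R : realType) (p : R).

Definition reps n (E : {set {set 'I_n}}) : nat := 2 * threshold p #|E|.

Definition budget n (E : {set {set 'I_n}}) : nat := #|E| * reps E.

Definition accepted n (E : {set {set 'I_n}}) (h : seq bool) : {set {set 'I_n}} :=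
  [set e in E | threshold p #|E| < block_count (reps E) (nth false h) (index e (enum E))].

Definition majority_alg : algorithm := fun n E h =>
  if size h < budget E then Query (nth set0 (enum E) (size h %/ reps E))
  else Output (pick_tree (accepted E h)).

Section Run.
Variables (n : nat) (E Rz : {set {set 'I_n}}) (flips : nat -> bool).

Definition noisy_answer (j : nat) : bool :=
  (nth set0 (enum E) (j %/ reps E) \in Rz) (+) flips j.

Lemma exec_majority_from d i : i + d = budget E ->
  exec (majority_alg E) Rz flips d (mkseq noisy_answer i)
  = Some (pick_tree (accepted E (mkseq noisy_answer (budget E))), budget E).
Proof.
elim: d i => [|d IHd] i; rewrite /= /majority_alg size_mkseq.
  by rewrite addn0 => ->; rewrite ltnn.
move=> i_d; rewrite (_ : i < budget E) /=; last by rewrite -i_d -addSnnS leq_addr.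
by rewrite -mkseqS IHd ?addSnnS.
Qed.

Lemma exec_majority : exec (majority_alg E) Rz flips (budget E) [::]
  = Some (pick_tree (accepted E (mkseq noisy_answer (budget E))), budget E).
Proof. exact: exec_majority_from (add0n _). Qed.

Lemma block_count_noisy e : e \in E ->
  block_count (reps E) (nth false (mkseq noisy_answer (budget E))) (index e (enum E))
  = block_count (reps E) (fun j => (e \in Rz) (+) flips j) (index e (enum E)).
Proof.
move=> eE; have a_lt : index e (enum E) < #|E| by rewrite cardE index_mem mem_enum.
have reps_gt0 : 0 < reps E by rewrite muln_gt0.
apply: eq_bigr => i _; rewrite nth_mkseq; last first.
  apply: (@leq_trans ((index e (enum E)).+1 * reps E)).
    by rewrite mulSnr ltn_add2l.
  by rewrite leq_mul2r a_lt orbT.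
by rewrite /noisy_answer divnMDl // divn_small // addn0 nth_index ?mem_enum.
Qed.

Hypothesis RzE : Rz \subset E.

Lemma accepted_noisy :
  (forall a, a < #|E| -> block_count (reps E) flips a < threshold p #|E|) ->
  accepted E (mkseq noisy_answer (budget E)) = Rz.
Proof.
move=> few_errors; apply/setP => e; rewrite inE.
have [eE | eNE] /= := boolP (e \in E); last first.
  by apply/esym/negP => /(subsetP RzE); rewrite (negbTE eNE).
have a_lt : index e (enum E) < #|E| by rewrite cardE index_mem mem_enum.
have := few_errors _ a_lt; rewrite block_count_noisy //.
case: (e \in Rz) => /= errors_lt.
  move: errors_lt; rewrite (block_count_negb _ flips) /reps.
  by set errors := block_count _ _ _; set r := threshold p #|E|; lia.
by apply/negbTE; rewrite -leqNgt ltnW.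
Qed.

Hypothesis Rz_conn : connected_sp Rz.

Lemma majority_success :
  (forall a, a < #|E| -> block_count (reps E) flips a < threshold p #|E|) ->
  success E Rz (exec (majority_alg E) Rz flips (budget E) [::]).
Proof.
move=> few_errors; rewrite exec_majority /= accepted_noisy //.
have [sub_T conn_T acyc_T] := pick_treeP Rz_conn.
by split=> //; split=> //; apply: subset_trans sub_T RzE.
Qed.

End Run.
End MajorityVote.

Section SuccessProbability.
Variables (R : realType) (p : R).
Local Open Scope ring_scope.
Hypotheses (p_ge0 : 0 <= p) (p_lt_half : p < 1 / 2).
Variables (n : nat) (E Rz : {set {set 'I_n}}).
Hypotheses (E_ge2 : (2 <= #|E|)%N) (RzE : Rz \subset E) (Rz_conn : connected_sp Rz).

Lemma budget_le :
  (budget p E)%:R <= 2 * (threshold_coef p + 1 / ln 2) * (#|E|%:R * ln #|E|%:R).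
Proof.
have := threshold_le p_ge0 p_lt_half E_ge2; rewrite /budget /reps !natrM.
set r := (threshold p #|E|)%:R; set c := threshold_coef p + 1 / ln 2; set L := ln _.
have : 0 <= #|E|%:R :> R by []; nra.
Qed.

Definition majority_run (f : {ffun 'I_(budget p E) -> bool}) :=
  exec (majority_alg p E) Rz (ext_flips f) (budget p E) [::].

Definition bad_block (f : {ffun 'I_(budget p E) -> bool}) (a : nat) : R :=
  (threshold p #|E| <= block_count (reps p E) (ext_flips f) a)%N%:R.

Lemma failure_le_bad_blocks f :
  1 - (successb E Rz (majority_run f))%:R <= \sum_(a < #|E|) bad_block f a.
Proof.
have sum_ge0 : 0 <= \sum_(a < #|E|) bad_block f a by apply: sumr_ge0 => a _; apply: ler0n.
have [succ | fail] := boolP (successb E Rz (majority_run f)); first by rewrite subrr.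
rewrite subr0.
have [/existsP[a bad_a] | no_bad] :=
  boolP [exists a : 'I_#|E|, threshold p #|E| <= block_count (reps p E) (ext_flips f) a]%N.
  rewrite (bigD1 a) //= {1}/bad_block bad_a lerDl.
  by apply: sumr_ge0 => b _; apply: ler0n.
case/negP: fail; apply/asboolP; apply: majority_success => // a a_lt.
by rewrite ltnNge; apply: contra no_bad => bad_a; apply/existsP; exists (Ordinal a_lt).
Qed.

Lemma bad_block_prob a : (a < #|E|)%N ->
  \sum_(f : {ffun 'I_(budget p E) -> bool}) weight p f * bad_block f a
  <= rate p ^+ threshold p #|E|.
Proof.
move=> a_lt; have reps_gt0 : (0 < reps p E)%N by rewrite muln_gt0.
have p01 : 0 <= p <= 1 by apply/andP; split; move: p_ge0 p_lt_half; lra.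
rewrite /bad_block; under eq_bigr => f _ do rewrite (block_count_ext_flips reps_gt0 a_lt f).
apply: le_trans (chernoff_tail _ _ p01 (tilt_ge1 p_ge0 p_lt_half)) _.
by rewrite card_block // /reps exprM -expr_div_n.
Qed.

Lemma failure_prob :
  \sum_(f : {ffun 'I_(budget p E) -> bool})
     weight p f * (1 - (successb E Rz (majority_run f))%:R)
  <= #|E|%:R * rate p ^+ threshold p #|E|.
Proof.
have p01 : 0 <= p <= 1 by apply/andP; split; move: p_ge0 p_lt_half; lra.
apply: (@le_trans _ _ (\sum_(f : {ffun 'I_(budget p E) -> bool})
                          weight p f * \sum_(a < #|E|) bad_block f a)).
  refine (ler_sum _ (fun f _ => _)).
  by rewrite ler_wpM2l ?weight_ge0 ?failure_le_bad_blocks.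
under eq_bigr => f _ do rewrite mulr_sumr.
rewrite exchange_big /=.
apply: le_trans (ler_sum _ (fun a _ => bad_block_prob (ltn_ord a))) _.
by rewrite sumr_const card_ord mulr_natl.
Qed.

Lemma majority_success_prob :
  1 - #|E|%:R^-1 <= \sum_(f : {ffun 'I_(budget p E) -> bool})
                      weight p f * (successb E Rz (majority_run f))%:R.
Proof.
have m_gt0 : 0 < #|E|%:R :> R by rewrite ltr0n (leq_trans _ E_ge2).
rewrite sum_weight_complement lerD2l lerN2 (le_trans failure_prob) //.
apply: le_trans (ler_wpM2l (ltW m_gt0) (rate_expr_threshold p_ge0 p_lt_half E_ge2)) _.
by rewrite expr2 invfM mulrA mulfV ?mul1r // lt0r_neq0.
Qed.

End SuccessProbability.

Local Open Scope ring_scope.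

Theorem lemma1 (R : realType) (p : R) :
  0 <= p -> p < 1 / 2 ->
  exists (A : algorithm) (C : R),
    forall eps : R, 0 < eps ->
    exists M : nat,
      forall (n : nat) (E : {set {set 'I_n}}),
        simple_graph E -> (2 <= #|E|)%N -> (M <= #|E|)%N ->
        forall Rz : {set {set 'I_n}}, Rz \subset E -> connected_sp Rz ->
        exists K : nat,
          [/\ K%:R <= C * (#|E|%:R * ln (#|E|%:R)),
              (forall flips : nat -> bool,
                  exec (A n E) Rz flips K [::] != None)
            & 1 - eps <=
              \sum_(f : {ffun 'I_K -> bool})
                 weight p f * (successb E Rz (exec (A n E) Rz (ext_flips f) K [::]))%:R].
Proof.
move=> p_ge0 p_lt_half.
exists (majority_alg p), (2 * (threshold_coef p + 1 / ln 2)) => eps eps_gt0.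
exists (Num.truncn eps^-1).+1 => n E _ E_ge2 E_large Rz RzE Rz_conn.
exists (budget p E); split.
- exact: budget_le.
- by move=> flips; rewrite exec_majority.
apply: le_trans (majority_success_prob p_ge0 p_lt_half E_ge2 RzE Rz_conn).
have eps_inv_lt : eps^-1 < #|E|%:R by apply: lt_le_trans (truncnS_gt _) _; rewrite ler_nat.
have E_gt0 : 0 < #|E|%:R :> R by rewrite ltr0n (leq_trans _ E_ge2).
by rewrite lerD2l lerN2 -[leRHS]invrK lef_pV2 ?posrE ?invr_gt0 // ltW.
Qed.
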